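(* Let $\Delta t_n>0$, $\mathbf u^{n-1}\in W^{\rm en}_{\mathcal D}$, and let $\mathbf u^n\in W^{\rm ad}_{\mathcal D}$ be a solution of the scheme $$\int_\Omega\pi_{\mathcal D}\mathbf u^n\pi_{\mathcal D}\mathbf v\,dx+\Delta t_n\sum_{K\in\mathcal M}\boldsymbol\delta_K\mathbf h(\mathbf u^n)\cdot\mathbf B_K(\mathbf u^n)\boldsymbol\delta_K\mathbf v=\int_\Omega\pi_{\mathcal D}\mathbf u^{n-1}\pi_{\mathcal D}\mathbf v\,dx\quad\forall\mathbf v\in W_{\mathcal D}.$$ Then $$\mathcal E_{\mathcal D}(\mathbf u^n)+\Delta t_n\sum_{K\in\mathcal M}\boldsymbol\delta_K\mathbf h(\mathbf u^n)\cdot\mathbf B_K(\mathbf u^n)\boldsymbol\delta_K\mathbf h(\mathbf u^n)\le\mathcal E_{\mathcal D}(\mathbf u^{n-1}).$$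
   Context: Continuous data: $\Omega\subset\mathbb R^d$ ($d\in\{2,3\}$) connected bounded open polyhedral. (A1) $\eta:\mathbb R_+\to\mathbb R_+$ continuous, $\eta(0)=0$, $\eta>0$ on $u\ne0$, nondecreasing on $\mathbb R_+$, extended evenly. (A2) $p\in L^1_{loc}(\mathbb R_+)$ absolutely continuous, increasing on $(0,\infty)$, $p(u)\to+\infty$ as $u\to\infty$; if $p(0)=\lim_{u\downarrow0}p(u)$ is finite, $p(u)=2p(0)-p(-u)$ for $u\le0$; $I_p=(0,\infty)$ if $p(0)=-\infty$, else $\mathbb R$; $\sqrt\eta p'\in L^1_{loc}(\mathbb R_+)$, $\sqrt{\eta(u)}p(u)\to0$ as $u\downarrow0$. (A3) $\Lambda$ measurable, symmetric, uniformly elliptic and bounded. (A4) $\Gamma(u)=\int_1^u(p(a)-p(1))da$ on $\bar I_p$ ($+\infty$ for $u<0$ if $p(0)=-\infty$). (A5) $V$ Lipschitz. Mesh: cells $\mathcal M$ (disjoint open polyhedra covering $\bar\Omega$, star-shaped w.r.t. $x_K$), vertices $\mathcal V$ at $x_s$, $\mathcal V_K$, $\mathcal M_s$ as usual, simplicial submesh $\mathcal T$ (each cell split into simplices with apex $x_K$), $W_{\mathcal D}=\{\mathbf v=(v_K,v_s)\}$; $\pi_{\mathcal T}\mathbf v$ the continuous piecewise affine interpolant on $\mathcal T$ (values $v_K$ at $x_K$, $v_s$ at $x_s$, and at face centers $x_\sigma=\sum\beta_{\sigma,s}x_s$ when $d=3$ the value $\sum\beta_{\sigma,s}v_s$); $\nabla_{\mathcal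 T}=\nabla\pi_{\mathcal T}$; $\mathbf e_\beta$ unit vectors. Mass lumping: $\alpha_{K,s}\ge0$, $\sum_s\alpha_{K,s}\le1$, $m_{K,s}=\alpha_{K,s}|K|$, $m_s=\sum_{K\in\mathcal M_s}m_{K,s}$, $m_K=|K|-\sum_sm_{K,s}$, disjoint $\omega_K,\omega_{K,s}\subset K$ covering $K$ up to null sets with these measures, $\omega_s=\bigcup_K\omega_{K,s}$, $\pi_{\mathcal D}\mathbf v=\sum v_K\mathbf 1_{\omega_K}+\sum v_s\mathbf 1_{\omega_s}$. $a^K_{s,s'}=\int_K\Lambda\nabla_{\mathcal T}\mathbf e_s\cdot\nabla_{\mathcal T}\mathbf e_{s'}$, $\mathbf A_K=(a^K_{s,s'})_{s,s'\in\mathcal V_K}$, $\boldsymbol\delta_K\mathbf v=(v_K-v_s)_{s\in\mathcal V_K}$. Scheme: $\mathbf V=(V(x_K),V(x_s))$; $W^{\rm ad}_{\mathcal D}=\{\mathbf v:v_\nu\in I_p\ \forall\nu\}$; $\mathcal E_{\mathcal D}(\mathbf v)=\int_\Omega(\Gamma(\pi_{\mathcal D}\mathbf v)+\pi_{\mathcal D}\mathbf v\pi_{\mathcal D}\mathbf V)$; $W^{\rm en}_{\mathcal D}=\{\mathcal E_{\mathcal D}<\infty\}$; $\mathbf h(\mathbf u)=(p(u_\nu)+V_\nu)_{\nu\in\mathcal M\cup\mathcal V}$; $\eta_{K,s}(\mathbf u)=(\eta(u_K)+\eta(u_s))/2$; $\mathbf M_K(\mathbf u)=\operatorname{diag}(\sqrt{\eta_{K,s}(\mathbf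 u)})_{s\in\mathcal V_K}$; $\mathbf B_K(\mathbf u)=\mathbf M_K(\mathbf u)\mathbf A_K\mathbf M_K(\mathbf u)$. *)

From HB Require Import structures.
From mathcomp Require Import all_boot all_order all_algebra.
From mathcomp Require Import all_classical all_reals all_analysis.
Set Implicit Arguments. Unset Strict Implicit. Unset Printing Implicit Defensive.
Import Order.TTheory GRing.Theory Num.Theory.
Import numFieldNormedType.Exports.
Local Open Scope classical_set_scope.
Local Open Scope ring_scope.

Section Defs.
Variable R : realType.
Local Notation mu := (@lebesgue_measure R).

Definition eta_assumptions (eta : R -> R) : Prop :=
  [/\ continuous eta, eta 0 = 0,
      (forall u, u != 0 -> 0 < eta u),
      (forall x y, 0 <= x -> x <= y -> eta x <= eta y) &
      (forall u, eta (- u) = eta u)].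

Definition abs_cont_on (f : R -> R) (a b : R) : Prop :=
  forall e : R, 0 < e -> exists2 d : R, 0 < d &
    forall (n : nat) (lo hi : nat -> R),
      (forall i, (i < n)%N -> a <= lo i /\ lo i <= hi i /\ hi i <= b) ->
      (forall i, (i.+1 < n)%N -> hi i <= lo i.+1) ->
      \sum_(i < n) (hi i - lo i) < d ->
      \sum_(i < n) `|f (hi i) - f (lo i)| < e.

Definition L1loc_Rplus (f : R -> R) : Prop :=
  forall b : R, 0 < b -> mu.-integrable `]0, b] (EFin \o f).

(* (A2).  [p0fin] says whether p(0) = lim_{u↓0} p(u) is finite, and then
   [p0] is that limit. *)
Definition p_assumptions (eta : R -> R) (p : R -> R) (p0fin : bool) (p0 : R)
  : Prop :=
  L1loc_Rplus p /\
  (forall a b, 0 < a -> a <= b -> abs_cont_on p a b) /\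
  (forall x y, 0 < x -> x < y -> p x < p y) /\
  (p x @[x --> +oo] --> +oo) /\
  (if p0fin then p x @[x --> 0^'+] --> p0
            else p x @[x --> 0^'+] --> -oo) /\
  (p0fin -> forall u, u <= 0 -> p u = 2 * p0 - p (- u)) /\
  L1loc_Rplus (fun u => Num.sqrt (eta u) * derive1 p u) /\
  ((fun u => Num.sqrt (eta u) * p u) @ 0^'+ --> 0).

Definition in_Ip (p0fin : bool) (u : R) : bool := if p0fin then true else 0 < u.

(* (A4) Gamma(u) = int_1^u (p(a) - p(1)) da (oriented integral) *)
Definition Gamma_fin (p : R -> R) (u : R) : R :=
  if 1 <= u then Rintegral mu `[1, u] (fun a => p a - p 1)
  else - Rintegral mu `[u, 1] (fun a => p a - p 1).

Definition Gamma (p0fin : bool) (p : R -> R) (u : R) : \bar R :=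
  if (~~ p0fin) && (u < 0) then +oo%E else (Gamma_fin p u)%:E.

Section Mesh.
Variables (cell vert : finType) (VK : cell -> {set vert})
          (vol : cell -> R) (alpha : cell -> vert -> R).

Definition mKs (K : cell) (s : vert) : R := alpha K s * vol K.
Definition m_vert (s : vert) : R := \sum_(K : cell | s \in VK K) mKs K s.
Definition m_cell (K : cell) : R := vol K - \sum_(s in VK K) mKs K s.
Definition mass (nu : cell + vert) : R :=
  match nu with inl K => m_cell K | inr s => m_vert s end.

(* int_Omega pi_D u * pi_D v dx  (pi_D piecewise constant on the
   omega_K, omega_s, which have measures m_K, m_s) *)
Definition L2D (u v : cell + vert -> R) : R :=
  \sum_(nu : cell + vert) mass nu * u nu * v nu.

Definition energyD (p0fin : bool) (p : R -> R) (Vv : cell + vert -> R)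
  (v : cell + vert -> R) : \bar R :=
  (\sum_(nu : cell + vert)
     ((mass nu)%:E * (Gamma p0fin p (v nu) + (v nu * Vv nu)%:E)))%E.

Definition hvec (p : R -> R) (Vv : cell + vert -> R) (u : cell + vert -> R)
  (nu : cell + vert) : R := p (u nu) + Vv nu.

Definition etaKs (eta : R -> R) (u : cell + vert -> R) (K : cell) (s : vert)
  : R := (eta (u (inl K)) + eta (u (inr s))) / 2.

Definition deltaK (v : cell + vert -> R) (K : cell) (s : vert) : R :=
  v (inl K) - v (inr s).

(* B_K(u) = M_K(u) A_K M_K(u) *)
Definition BK (eta : R -> R) (A : cell -> vert -> vert -> R)
  (u : cell + vert -> R) (K : cell) (s s' : vert) : R :=
  Num.sqrt (etaKs eta u K s) * A K s s' * Num.sqrt (etaKs eta u K s').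

Definition diffusionD (eta : R -> R) (A : cell -> vert -> vert -> R)
  (u w v : cell + vert -> R) : R :=
  \sum_(K : cell) \sum_(s in VK K) \sum_(s' in VK K)
     deltaK w K s * BK eta A u K s s' * deltaK v K s'.

End Mesh.
End Defs.

From HB Require Import structures.
From mathcomp Require Import all_boot all_order all_algebra.
From mathcomp Require Import all_classical all_reals all_analysis.
From mathcomp Require Import ring lra measurable_realfun.
Import Order.TTheory GRing.Theory Num.Theory.
Import numFieldNormedType.Exports.
Local Open Scope classical_set_scope.
Local Open Scope ring_scope.

(* Gamma is convex with Gamma' = p - p 1, so Gamma b - Gamma a <= (b - a) (p b - p 1)
   for b in I_p and a in its closure, where Gamma is finite.  Weighting by the lumped
   masses and adding the linear potential term bounds E(u^n) - E(u^{n-1}) by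
   int (pi u^n - pi u^{n-1}) (pi h(u^n) - p 1).  Testing the scheme with v = h(u^n)
   turns the h-part into -dt times the dissipation, and testing with v = 1 (whose
   delta_K vanish) gives mass conservation, which removes the p 1 part.  Finiteness
   of E(u^{n-1}) is what puts u^{n-1} in the closure of I_p at every charged unknown. *)

Section oriented_Rintegral.
Variable R : realType.
Local Notation mu := (@lebesgue_measure R).
Implicit Types (f : R -> R) (a b t x y z : R).

Lemma lebesgue_measure_itv_lty (b0 b1 : bool) a b :
  (mu [set` Interval (BSide b0 a) (BSide b1 b)] < +oo)%E.
Proof. by rewrite lebesgue_measure_itv; case: ifP => //= _; rewrite -EFinB ltry. Qed.

Lemma fine_lebesgue_measure_itv (b0 b1 : bool) a b : a <= b ->
  fine (mu [set` Interval (BSide b0 a) (BSide b1 b)]) = b - a.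
Proof.
rewrite lebesgue_measure_itv le_eqVlt => /predU1P[->|ab] /=.
  by rewrite ltxx subrr.
by rewrite lte_fin ab.
Qed.

Lemma integrable_cst_itv (b0 b1 : bool) a b c :
  mu.-integrable [set` Interval (BSide b0 a) (BSide b1 b)] (EFin \o cst c).
Proof.
apply: measurable_bounded_integrable => //; first exact: lebesgue_measure_itv_lty.
exact: bounded_cst.
Qed.

Lemma integrable_itv_obnd_cbnd f x y : x <= y ->
  mu.-integrable `]x, y] (EFin \o f) -> mu.-integrable `[x, y] (EFin \o f).
Proof.
move=> xy /integrableP[mf ifoo]; apply/integrableP; split.
  have -> : [set` `[x, y]] = [set x] `|` [set` `]x, y]] :> set R.
    apply/seteqP; split => t /=; rewrite !in_itv /=.
      move=> /andP[xt ty]; have [->|tx] := eqVneq t x; first by left.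
      by right; rewrite ty andbT lt_neqAle eq_sym tx.
    by move=> [->|/andP[? ?]]; apply/andP; split; lra.
  by apply/measurable_funU => //; split => //; exact: measurable_fun_set1.
rewrite -integral_itv_obnd_cbnd //.
by apply/measurable_EFinP; apply: measurableT_comp => //; apply/measurable_EFinP.
Qed.

Lemma Rintegral_itv_split f x y z : x <= y -> y <= z ->
  mu.-integrable `[x, z] (EFin \o f) ->
  Rintegral mu `[x, z] f = Rintegral mu `[x, y] f + Rintegral mu `[y, z] f.
Proof.
move=> xy yz fi.
have fi' : mu.-integrable `]y, z] (EFin \o f).
  by apply: integrableS fi => //; apply: subset_itvr; rewrite bnd_simp.
rewrite -(Rintegral_itv_obnd_cbnd fi') -(Rintegral_itvB fi) ?bnd_simp //.
by rewrite addrC subrK.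
Qed.

Definition oriented_Rintegral f a b : R :=
  if a <= b then Rintegral mu `[a, b] f else - Rintegral mu `[b, a] f.

Section on_an_interval.
Variables (f : R -> R) (J : R -> bool).
Hypothesis fJ : forall {x y}, J x -> J y -> x <= y -> mu.-integrable `[x, y] (EFin \o f).

Lemma oriented_RintegralD x y z : J x -> J y -> J z ->
  oriented_Rintegral f x z = oriented_Rintegral f x y + oriented_Rintegral f y z.
Proof.
move=> Jx Jy Jz; rewrite /oriented_Rintegral.
case: (lerP x y) => xy; case: (lerP y z) => yz; case: (lerP x z) => xz.
- by rewrite (Rintegral_itv_split f _ _ _ xy yz (fJ Jx Jz xz)).
- lra.
- have := Rintegral_itv_split f _ _ _ xz (ltW yz) (fJ Jx Jy xy); lra.
- have := Rintegral_itv_split f _ _ _ (ltW xz) xy (fJ Jz Jy (ltW yz)); lra.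
- have := Rintegral_itv_split f _ _ _ (ltW xy) xz (fJ Jy Jz yz); lra.
- have := Rintegral_itv_split f _ _ _ yz (ltW xz) (fJ Jy Jx (ltW xy)); lra.
- lra.
- have := Rintegral_itv_split f _ _ _ (ltW yz) (ltW xy) (fJ Jz Jx (ltW xz)); lra.
Qed.

Lemma oriented_Rintegral_le_mul a b : J a -> J b ->
  (forall t, a < t <= b -> f t <= f b) ->
  (forall t, b <= t <= a -> f b <= f t) ->
  oriented_Rintegral f a b <= (b - a) * f b.
Proof.
move=> Ja Jb fab fba; rewrite /oriented_Rintegral; case: (lerP a b) => ab.
  have fi : mu.-integrable `]a, b] (EFin \o f).
    by apply: integrableS (fJ Ja Jb ab) => //; apply: subset_itvr; rewrite bnd_simp.
  rewrite -(Rintegral_itv_obnd_cbnd fi).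
  apply: (le_trans (le_Rintegral _ fi (integrable_cst_itv _ _ a b (f b)) _)) => //.
    by rewrite /cst Rintegral_cst // fine_lebesgue_measure_itv // mulrC.
rewrite lerNl -mulNr opprB.
apply: (le_trans _ (le_Rintegral _ (integrable_cst_itv _ _ b a (f b)) (fJ Jb Ja (ltW ab)) _)) => //.
  by rewrite /cst Rintegral_cst // fine_lebesgue_measure_itv ?(ltW ab) // mulrC.
Qed.

End on_an_interval.
End oriented_Rintegral.
Arguments oriented_Rintegral {R}.
Arguments oriented_RintegralD {R f J} fJ {x y z}.
Arguments oriented_Rintegral_le_mul {R f J} fJ {a b}.

Definition in_cl_Ip {R : realType} (p0fin : bool) (u : R) : bool := p0fin || (0 <= u).

Section Gamma.
Variables (R : realType) (p0fin : bool) (p : R -> R).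
Implicit Types u : R.

Lemma in_Ip_cl u : in_Ip p0fin u -> in_cl_Ip p0fin u.
Proof. by rewrite /in_Ip /in_cl_Ip; case: p0fin => //= /ltW. Qed.

Lemma in_Ip_gt a u : in_cl_Ip p0fin a -> a < u -> in_Ip p0fin u.
Proof. by rewrite /in_cl_Ip /in_Ip; case: p0fin => //= /le_lt_trans; apply. Qed.

Lemma GammaE u : in_cl_Ip p0fin u -> Gamma p0fin p u = (Gamma_fin p u)%:E.
Proof. by rewrite /in_cl_Ip /Gamma; case: p0fin => //= u0; rewrite ltNge u0. Qed.

Lemma Gamma_eqy u : ~~ in_cl_Ip p0fin u -> Gamma p0fin p u = +oo%E.
Proof. by rewrite /in_cl_Ip /Gamma negb_or -ltNge => ->. Qed.

End Gamma.
Arguments in_Ip_cl {R p0fin u}.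
Arguments in_Ip_gt {R p0fin a u}.

Section p_properties.
Variables (R : realType) (eta p : R -> R) (p0fin : bool) (p0 : R).
Hypothesis Hp : p_assumptions eta p p0fin p0.
Local Notation mu := (@lebesgue_measure R).

Lemma p_le_pos s t : 0 < s -> s <= t -> p s <= p t.
Proof.
case: Hp => _ [_ [p_lt _]] s0; rewrite le_eqVlt => /predU1P[->//|st].
exact/ltW/p_lt.
Qed.

Lemma p0_le_p u : p0fin -> 0 < u -> p0 <= p u.
Proof.
case: Hp => _ [_ [p_lt [_ [+ _]]]] p0fin1 u0; rewrite p0fin1 => p_lim.
rewrite leNgt; apply/negP => pu.
have [t [put [t0 tu]]] : exists t, p u < p t /\ 0 < t /\ t < u.
  apply: (@filter_ex _ (0^'+ : set_system R)).
  apply: filterI; first exact: (cvgr_gt _ p_lim).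
  exact: filterI (nbhs_right_gt 0) (nbhs_right_lt u0).
by have := p_lt t u t0 tu; lra.
Qed.

Lemma p_nondecreasing : p0fin -> {homo p : s t / s <= t}.
Proof.
move=> p0fin1.
have p_refl u : u <= 0 -> p u = 2 * p0 - p (- u).
  by case: Hp => _ [_ [_ [_ [_ [+ _]]]]]; apply.
have p_0 : p 0 = p0 by have := p_refl 0 (lexx _); rewrite oppr0; lra.
have p0_le u : 0 <= u -> p0 <= p u.
  by rewrite le_eqVlt => /predU1P[<-|/p0_le_p]; [rewrite p_0|apply].
have p_le_nneg v w : 0 <= v -> v <= w -> p v <= p w.
  rewrite le_eqVlt => /predU1P[<-|v0] vw; last exact: p_le_pos.
  by rewrite p_0; apply: p0_le.
move=> s t st; have [t0|t0] := lerP t 0.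
  rewrite (p_refl s) ?(le_trans st t0) // (p_refl t) //.
  have : p (- t) <= p (- s) by apply: p_le_nneg; rewrite ?oppr_ge0 ?lerN2.
  lra.
have [s0|s0] := lerP s 0; last exact: p_le_pos.
rewrite (p_refl s) //; have := p0_le (- s); rewrite oppr_ge0 => /(_ s0).
have := p0_le t (ltW t0); lra.
Qed.

Lemma p_le s t : in_Ip p0fin s -> s <= t -> p s <= p t.
Proof. by rewrite /in_Ip; case: ifP => [/p_nondecreasing + _|_ /p_le_pos]; apply. Qed.

Lemma integrable_p_sub x y : in_cl_Ip p0fin x -> in_cl_Ip p0fin y -> x <= y ->
  mu.-integrable `[x, y] (EFin \o (fun a => p a - p 1)).
Proof.
rewrite /in_cl_Ip; case p0fin1: p0fin => /= x0 y0 xy.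
  have p_nd := p_nondecreasing p0fin1.
  apply: measurable_bounded_integrable => //; first exact: lebesgue_measure_itv_lty.
    by apply: nondecreasing_measurable => // s t st; rewrite lerD2r p_nd.
  rewrite /bounded_near; near=> M => t /=; rewrite in_itv /= => /andP[xt ty].
  have : `|p t - p 1| <= `|p x - p 1| + `|p y - p 1|.
    have := p_nd _ _ xt; have := p_nd _ _ ty.
    rewrite ler_norml => ? ?; apply/andP; split.
      by have := ler_norm (- (p x - p 1)); rewrite normrN; have := normr_ge0 (p y - p 1); lra.
    by have := ler_norm (p y - p 1); have := normr_ge0 (p x - p 1); lra.
  by move/le_trans; apply; near: M; exact: nbhs_pinfty_ge.
have p_int : mu.-integrable `]0, y + 1] (EFin \o p).
  by case: Hp => + _; apply; lra.
have p_sub_int : mu.-integrable `]0, y + 1] (EFin \o (fun a => p a - p 1)).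
  rewrite (_ : _ \o _ = (EFin \o p) \- (EFin \o cst (p 1)))%E; last first.
    by apply/funext => t /=; rewrite EFinB.
  exact/integrableB/integrable_cst_itv.
apply: integrable_itv_obnd_cbnd => //; apply: integrableS p_sub_int => //.
by move=> t /=; rewrite !in_itv /= => /andP[? ?]; apply/andP; split; lra.
Unshelve. all: by end_near.
Qed.

Lemma Gamma_fin_sub_le a b : in_cl_Ip p0fin a -> in_Ip p0fin b ->
  Gamma_fin p b - Gamma_fin p a <= (b - a) * (p b - p 1).
Proof.
move=> a_cl b_Ip.
have one_cl : in_cl_Ip p0fin (1 : R) by rewrite /in_cl_Ip ler01 orbT.
have GammaE u : Gamma_fin p u = oriented_Rintegral (fun a => p a - p 1) 1 u by [].
rewrite !GammaE (oriented_RintegralD integrable_p_sub one_cl a_cl (in_Ip_cl b_Ip)).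
rewrite addrC addKr; apply: (oriented_Rintegral_le_mul integrable_p_sub a_cl (in_Ip_cl b_Ip)) => t.
  by move=> /andP[a_t t_b]; rewrite lerD2r (p_le _ _ (in_Ip_gt a_cl a_t) t_b).
by move=> /andP[b_t _]; rewrite lerD2r p_le.
Qed.

End p_properties.
Arguments Gamma_fin_sub_le {R eta p p0fin p0} Hp {a b}.

Section discrete_energy.
Variables (R : realType) (cell vert : finType) (VK : cell -> {set vert})
  (vol : cell -> R) (alpha : cell -> vert -> R).
Local Notation m := (mass VK vol alpha).
Local Notation L2 := (L2D VK vol alpha).

Lemma mass_ge0 : (forall K, 0 < vol K) -> (forall K s, s \in VK K -> 0 <= alpha K s) ->
  (forall K, \sum_(s in VK K) alpha K s <= 1) -> forall nu, 0 <= m nu.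
Proof.
move=> vol_gt0 alpha_ge0 alpha_le1 [K|s] /=.
  rewrite /m_cell /mKs -big_distrl /=.
  by have := alpha_le1 K; have := vol_gt0 K; nra.
by apply: sumr_ge0 => K sK; rewrite /mKs mulr_ge0 ?alpha_ge0 ?ltW.
Qed.

Lemma diffusionD_cst (eta : R -> R) (A : cell -> vert -> vert -> R)
  (u w : cell + vert -> R) (c : R) : diffusionD VK eta A u w (fun=> c) = 0.
Proof.
apply: big1 => K _; apply: big1 => s _; apply: big1 => s' _.
by rewrite /deltaK subrr mulr0.
Qed.

Variables (p0fin : bool) (p : R -> R) (Vv : cell + vert -> R).

Definition energy_fin (v : cell + vert -> R) : R :=
  \sum_nu m nu * (Gamma_fin p (v nu) + v nu * Vv nu).

Lemma energyD_fin v : (forall nu, m nu != 0 -> in_cl_Ip p0fin (v nu)) ->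
  energyD VK vol alpha p0fin p Vv v = (energy_fin v)%:E.
Proof.
move=> v_cl; rewrite /energyD /energy_fin -sumEFin; apply: eq_bigr => nu _.
have [->|m_neq0] := eqVneq (m nu) 0; first by rewrite mul0e mul0r.
by rewrite GammaE ?v_cl // -EFinD -EFinM.
Qed.

Hypothesis m_ge0 : forall nu, 0 <= m nu.

Lemma energyD_lty_in_cl_Ip v : (energyD VK vol alpha p0fin p Vv v < +oo)%E ->
  forall nu, m nu != 0 -> in_cl_Ip p0fin (v nu).
Proof.
move=> E_lty nu m_neq0; apply/negPn/negP => v_ncl.
have m_gt0 : 0 < m nu by rewrite lt_def m_neq0 m_ge0.
suff E_eqy : energyD VK vol alpha p0fin p Vv v = +oo%E.
  by rewrite E_eqy ltxx in E_lty.
apply/esum_eqyP.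
  (* m_ge0 rules out a -oo term that could absorb the +oo coming from Gamma. *)
  move=> nu' _; have [v_cl|v_ncl'] := boolP (in_cl_Ip p0fin (v nu')).
    by rewrite GammaE // -EFinD -EFinM.
  rewrite Gamma_eqy // addye // gt_eqF // (lt_le_trans ltNy0) //.
  by rewrite mule_ge0 // lee_fin.
by exists nu; split => //; rewrite Gamma_eqy // addye // muleC gt0_mulye.
Qed.

Variables (eta : R -> R) (p0 : R).
Hypothesis Hp : p_assumptions eta p p0fin p0.

Lemma energy_fin_sub_le u w : (forall nu, in_Ip p0fin (u nu)) ->
  (forall nu, m nu != 0 -> in_cl_Ip p0fin (w nu)) ->
  energy_fin u - energy_fin w <=
  L2 u (hvec p Vv u) - L2 w (hvec p Vv u)
  - p 1 * (L2 u (fun=> 1) - L2 w (fun=> 1)).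
Proof.
move=> u_Ip w_cl.
have -> : L2 u (hvec p Vv u) - L2 w (hvec p Vv u)
          - p 1 * (L2 u (fun=> 1) - L2 w (fun=> 1)) =
          \sum_nu m nu * (u nu - w nu) * (hvec p Vv u nu - p 1).
  rewrite /L2D -!sumrB mulr_sumr -sumrB; apply: eq_bigr => nu _; ring.
rewrite /energy_fin -sumrB; apply: ler_sum => nu _.
have [->|m_neq0] := eqVneq (m nu) 0; first by rewrite !mul0r subrr.
rewrite -mulrBr -mulrA ler_wpM2l // /hvec.
have := Gamma_fin_sub_le Hp (w_cl nu m_neq0) (u_Ip nu).
rewrite (_ : p (u nu) + Vv nu - p 1 = (p (u nu) - p 1) + Vv nu); last by ring.
rewrite mulrDr [X in _ <= _ + X]mulrBl; lra.
Qed.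

End discrete_energy.
Arguments mass_ge0 {R cell vert VK vol alpha}.
Arguments energyD_fin {R cell vert VK vol alpha p0fin p Vv v}.
Arguments energyD_lty_in_cl_Ip {R cell vert VK vol alpha p0fin p Vv} m_ge0 {v}.
Arguments energy_fin_sub_le {R cell vert VK vol alpha p0fin p Vv} m_ge0 {eta p0} Hp {u w}.

Theorem lemma3p1 (R : realType) (d : nat)
  (eta p : R -> R) (p0fin : bool) (p0 : R) (V : 'rV[R]_d -> R)
  (cell vert : finType) (VK : cell -> {set vert})
  (pts : cell + vert -> 'rV[R]_d)
  (vol : cell -> R) (alpha : cell -> vert -> R)
  (A : cell -> vert -> vert -> R)
  (dt : R) (uold unew : cell + vert -> R) :
  (d == 2)%N || (d == 3)%N ->
  eta_assumptions eta ->
  p_assumptions eta p p0fin p0 ->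
  (exists k : R, k.-lipschitz V) ->
  (forall K, 0 < vol K) ->
  (forall K s, s \in VK K -> 0 <= alpha K s) ->
  (forall K, \sum_(s in VK K) alpha K s <= 1) ->
  0 < dt ->
  (energyD VK vol alpha p0fin p (fun nu => V (pts nu)) uold < +oo)%E ->
  (forall nu, in_Ip p0fin (unew nu)) ->
  (forall v : cell + vert -> R,
     L2D VK vol alpha unew v
     + dt * diffusionD VK eta A unew (hvec p (fun nu => V (pts nu)) unew) v
     = L2D VK vol alpha uold v) ->
  (energyD VK vol alpha p0fin p (fun nu => V (pts nu)) unew
   + (dt * diffusionD VK eta A unew (hvec p (fun nu => V (pts nu)) unew)
                               (hvec p (fun nu => V (pts nu)) unew))%:E
   <= energyD VK vol alpha p0fin p (fun nu => V (pts nu)) uold)%E.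
Proof.
move=> _ _ Hp _ vol_gt0 alpha_ge0 alpha_le1 _ Eold_lty unew_Ip scheme.
set Vv := fun nu => V (pts nu).
have m_ge0 := mass_ge0 vol_gt0 alpha_ge0 alpha_le1.
have uold_cl := energyD_lty_in_cl_Ip m_ge0 Eold_lty.
have unew_cl nu (_ : mass VK vol alpha nu != 0) := in_Ip_cl (unew_Ip nu).
rewrite (energyD_fin unew_cl) (energyD_fin uold_cl) -EFinD lee_fin.
have mass_conservation : L2D VK vol alpha unew (fun=> 1) = L2D VK vol alpha uold (fun=> 1).
  by rewrite -scheme diffusionD_cst mulr0 addr0.
have := energy_fin_sub_le (Vv := Vv) m_ge0 Hp unew_Ip uold_cl.
rewrite mass_conservation subrr mulr0 subr0.
have := scheme (hvec p Vv unew); lra.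
Qed.
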